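(* Let $\mathcal{X}=\prod_{i=1}^{p}\mathcal{X}_i$, where each $\mathcal{X}_i\subseteq\mathbb{R}^{n_i}$ is closed and convex, and write $\mathbf{x}=(\mathbf{x}(1),\dots,\mathbf{x}(p))$ with $\mathbf{x}(i)=\mathbf{U}_i^{\mathrm T}\mathbf{x}\in\mathbb{R}^{n_i}$ the $i$-th block. Let $f\in C^1(\mathcal{X},\mathbb{R})$ have block-coordinate Lipschitz gradient with block smoothness constants $(L_i)_{i=1}^p$, i.e. $\|\nabla_i f(\mathbf{x}+\mathbf{U}_i\mathbf{h}_i)-\nabla_i f(\mathbf{x})\|\le L_i\|\mathbf{h}_i\|$ for all $\mathbf{x}$ and $\mathbf{h}_i\in\mathbb{R}^{n_i}$, where $\nabla_i f:=\mathbf{U}_i^{\mathrm T}\nabla f$, and set $L:=\max_i L_i$. Let $h\in C(\mathcal{X},\mathbb{R})$ be $\alpha$-strongly convex with block-separable form $h(\mathbf{x})=\sum_{i=1}^p h_i(\mathbf{x}(i))$, and put $\Phi=f+h$ and $\Phi^*=\min_{\mathbf{x}\in\mathcal{X}}\Phi(\mathbf{x})$. Let $\omega$ be a distance generating function with modulus $\alpha$ whose prox-function is block separable, $V(\mathbf{x},\mathbf{z})=\sum_{i=1}^pV_i(\mathbf{x}(i),\mathbf{z}(i))$. Run coordinate mirror descent on $\Phi$ over $\mathcal{X}$ from $\mathbf{x}_0\in\mathcal{X}$ for $N$ outer iterations with all step sizes $\gamma_{k,i}:=\alpha/L$: set $\mathbf{x}_0^0=\mathbf{x}_0$; for each outer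 iteration $k$ and $i=1,\dots,p$, $$\mathbf{x}_k^i(i)\in\arg\min_{\mathbf{u}_i\in\mathcal{X}_i}\Big(\langle\nabla_i f(\mathbf{x}_k^{i-1}),\mathbf{u}_i\rangle+\tfrac{1}{\gamma_{k,i}}V_i(\mathbf{u}_i,\mathbf{x}_k^{i-1}(i))+h_i(\mathbf{u}_i)\Big),\qquad \mathbf{x}_k^i(j)=\mathbf{x}_k^{i-1}(j)\ (j\neq i),$$ and $\mathbf{x}_{k+1}^0:=\mathbf{x}_k^p$, $\mathbf{x}_k:=\mathbf{x}_k^0$. Define $\mathbf{g}_{\mathcal{X},k,i}:=\frac{1}{\gamma_{k,i}}\big(\mathbf{x}_k^{i-1}(i)-\mathbf{x}_k^{i}(i)\big)$, $\Delta(\mathbf{x}_k,\mathbf{x}_{k-1}):=\sum_{i=1}^p\|\mathbf{g}_{\mathcal{X},k,i}\|^2$, and $D:=\big((\Phi(\mathbf{x}_0)-\Phi^* )/L\big)^{1/2}$. Then $$\min_k\Delta(\mathbf{x}_k,\mathbf{x}_{k-1})\le\frac{D^2L}{N(\alpha^2/2L)}=\frac{2D^2L^2}{N\alpha^2},$$ the minimum being over the $N$ outer iterations.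
   Context: A distance generating function with modulus $\alpha>0$ (w.r.t. the Euclidean norm) is a continuously differentiable $\omega:\mathcal{X}\to\mathbb{R}$ with $\langle\mathbf{x}-\mathbf{z},\nabla\omega(\mathbf{x})-\nabla\omega(\mathbf{z})\rangle\ge\alpha\|\mathbf{x}-\mathbf{z}\|^2$ for all $\mathbf{x},\mathbf{z}\in\mathcal{X}$; its prox-function (Bregman divergence) is $V(\mathbf{x},\mathbf{z})=\omega(\mathbf{x})-\omega(\mathbf{z})-\langle\nabla\omega(\mathbf{z}),\mathbf{x}-\mathbf{z}\rangle$. The matrices $\mathbf{U}_i\in\mathbb{R}^{n\times n_i}$ ($n=\sum_i n_i$) satisfy $\mathbf{x}(i)=\mathbf{U}_i^{\mathrm T}\mathbf{x}$ and $\mathbf{x}=\sum_i\mathbf{U}_i\mathbf{x}(i)$. The minimum $\Phi^*$ is assumed to exist. *)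

From HB Require Import structures.
From mathcomp Require Import all_boot all_order all_algebra.
From mathcomp Require Import all_classical all_reals all_analysis.
Set Implicit Arguments. Unset Strict Implicit. Unset Printing Implicit Defensive.
Import Order.TTheory GRing.Theory Num.Theory.
Import numFieldNormedType.Exports.
Local Open Scope classical_set_scope.
Local Open Scope ring_scope.

Definition dotv (R : realType) (m : nat) (a b : 'cV[R]_m) : R :=
  \sum_(j < m) a j 0 * b j 0.

Definition enorm (R : realType) (m : nat) (a : 'cV[R]_m) : R :=
  Num.sqrt (dotv a a).

Definition convex_cV (R : realType) (m : nat) (S : set 'cV[R]_m) : Prop :=
  forall a b (t : R), S a -> S b -> 0 <= t -> t <= 1 ->
    S (t *: a + (1 - t) *: b).

Definition is_gradient (R : realType) (m : nat)
  (F : 'cV[R]_m -> R) (x g : 'cV[R]_m) : Prop :=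
  differentiable F x /\ forall d : 'cV[R]_m, 'd F x d = dotv g d.

Definition is_argmin (R : realType) (m : nat)
  (S : set 'cV[R]_m) (F : 'cV[R]_m -> R) (u : 'cV[R]_m) : Prop :=
  S u /\ forall v, S v -> F u <= F v.

Definition strongly_convex_on (R : realType) (m : nat) (alpha : R)
  (S : set 'cV[R]_m) (F : 'cV[R]_m -> R) : Prop :=
  forall a b (t : R), S a -> S b -> 0 <= t -> t <= 1 ->
    F (t *: a + (1 - t) *: b) <=
      t * F a + (1 - t) * F b - alpha / 2 * t * (1 - t) * enorm (a - b) ^+ 2.

From HB Require Import structures.
From mathcomp Require Import all_boot all_order all_algebra.
From mathcomp Require Import all_classical all_reals all_analysis.
From mathcomp Require Import ring lra.
Set Implicit Arguments. Unset Strict Implicit. Unset Printing Implicit Defensive.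
Import Order.TTheory GRing.Theory Num.Theory.
Import numFieldNormedType.Exports.
Local Open Scope classical_set_scope.
Local Open Scope ring_scope.

(* Every coordinate step is a mirror-prox step, seen in the full space along the segment
   from the new point x' back to the old point x.  The block Lipschitz bound along this
   segment gives the descent lemma f x' <= f x + <grad f x, x' - x> + L/2 |x' - x|^2.
   Minimality of x' against the points x' + t (x - x') of the segment, the strong
   monotonicity of grad omega (which bounds the Bregman term) and the convexity of h give,
   as t -> 0, <grad f x, x' - x> + L |x' - x|^2 <= h x - h x'.  Hence each coordinate step
   decreases Phi = f + h by L/2 |x'(i) - x(i)|^2 = alpha^2/(2L) |g_{X,k,i}|^2.  Summing over
   the blocks and the outer iterations telescopes to Phi(x_0) - Phi^*, and the smallest
   Delta is at most the average. *)

Lemma segmentE (R : pzRingType) (V : lmodType R) (x y : V) (s : R) :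
  x + s *: (y - x) = s *: y + (1 - s) *: x.
Proof. by rewrite scalerBr scalerBl scale1r addrCA addrA. Qed.

Lemma ler_linear_slack (R : realFieldType) (a b c : R) :
  (forall t, 0 < t <= 1 -> a <= b + c * t) -> a <= b.
Proof.
move=> slack; apply/ler_addgt0Pr => e e_gt0.
have c1_gt0 : 0 < `|c| + 1 by rewrite ltr_wpDl.
pose t := Num.min 1 (e / (`|c| + 1)).
have t_gt0 : 0 < t by rewrite lt_min ltr01 divr_gt0.
have t_le : t <= e / (`|c| + 1) by rewrite ge_min lexx orbT.
have ct_le : c * t <= e.
  apply: le_trans (ler_norm _) _; rewrite normrM (gtr0_norm t_gt0).
  apply: le_trans (ler_wpM2l (normr_ge0 c) t_le) _.
  by rewrite mulrCA ler_piMr ?ltW // ltr_pdivrMr // mul1r ltrDl.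
apply: le_trans (slack t _) _; first by rewrite t_gt0 ge_min lexx.
by rewrite lerD2l.
Qed.

Lemma sumrB_except (V : zmodType) (I : finType) (F G : I -> V) (i : I) :
  (forall j, j != i -> F j = G j) -> \sum_j F j - \sum_j G j = F i - G i.
Proof.
move=> FG; rewrite (bigD1 i) // [X in _ - X](bigD1 i) //= (eq_bigr G FG).
by rewrite opprD addrACA subrr addr0.
Qed.

Lemma sum_le_telescope (R : numDomainType) (m : nat) (u : nat -> R) (a : 'I_m -> R) :
  (forall i : 'I_m, a i <= u i - u i.+1) -> \sum_(i < m) a i <= u 0%N - u m.
Proof.
move=> a_le; rewrite -(opprB (u m)) -(telescope_sumr _ (leq0n m)) big_mkord -sumrN.
by apply: ler_sum => i _; rewrite opprB.
Qed.

Lemma exists_le_of_sum_le (R : realDomainType) (N : nat) (a : nat -> R) (B : R) :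
  (0 < N)%N -> \sum_(k < N) a k <= N%:R * B -> exists2 k, (k < N)%N & a k <= B.
Proof.
move=> N_gt0 sum_le.
have [/existsP[k akB]|/existsPn a_gt] := boolP [exists k : 'I_N, a k <= B].
  by exists k.
have : N%:R * B < \sum_(k < N) a k.
  rewrite -[in X in X * B](card_ord N) mulr_natl -sumr_const.
  apply: ltr_sum => [|k _]; first by rewrite has_predT /index_enum -enumT size_enum_ord.
  by rewrite ltNge a_gt.
by rewrite ltNge sum_le.
Qed.

Lemma cyclic_sweep_ind (T : Type) (P : T -> Prop) (p : nat) (xs : nat -> nat -> T) :
  P (xs 0%N 0%N) -> (forall k, xs k.+1 0%N = xs k p) ->
  (forall k (i : 'I_p), P (xs k i) -> P (xs k i.+1)) ->
  forall k i, (i <= p)%N -> P (xs k i).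
Proof.
move=> P00 next step.
have sweep k : P (xs k 0%N) -> forall i, (i <= p)%N -> P (xs k i).
  move=> Pk0; elim=> [//|i IH] ip.
  exact: (step k (Ordinal ip) (IH (ltnW ip))).
elim=> [|k IH]; first exact: sweep.
by apply: sweep; rewrite next; apply: IH.
Qed.

Section Euclidean.
Variables (R : realType) (m : nat).
Implicit Types (a b c : 'cV[R]_m).

Lemma dotvC a b : dotv a b = dotv b a.
Proof. by apply: eq_bigr => j _; rewrite mulrC. Qed.

Lemma dotvDl a b c : dotv (a + b) c = dotv a c + dotv b c.
Proof. by rewrite /dotv -big_split; apply: eq_bigr => j _; rewrite mxE mulrDl. Qed.

Lemma dotvNl a c : dotv (- a) c = - dotv a c.
Proof. by rewrite /dotv -sumrN; apply: eq_bigr => j _; rewrite mxE mulNr. Qed.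

Lemma dotvZl k a c : dotv (k *: a) c = k * dotv a c.
Proof. by rewrite /dotv mulr_sumr; apply: eq_bigr => j _; rewrite mxE mulrA. Qed.

Lemma dotvBl a b c : dotv (a - b) c = dotv a c - dotv b c.
Proof. by rewrite dotvDl dotvNl. Qed.

Lemma dotvDr a b c : dotv c (a + b) = dotv c a + dotv c b.
Proof. by rewrite dotvC dotvDl !(dotvC c). Qed.

Lemma dotvNr a c : dotv c (- a) = - dotv c a.
Proof. by rewrite dotvC dotvNl dotvC. Qed.

Lemma dotvZr k a c : dotv c (k *: a) = k * dotv c a.
Proof. by rewrite dotvC dotvZl dotvC. Qed.

Lemma dotvBr a b c : dotv c (a - b) = dotv c a - dotv c b.
Proof. by rewrite dotvDr dotvNr. Qed.

Lemma dotv_mulmx k a (M : 'M[R]_(m, k)) (w : 'cV[R]_k) :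
  dotv a (M *m w) = dotv (M^T *m a) w.
Proof.
have dotvE n (u v : 'cV[R]_n) : dotv u v = (u^T *m v) 0 0.
  by rewrite mxE; apply: eq_bigr => j _; rewrite mxE.
by rewrite !dotvE trmx_mul trmxK mulmxA.
Qed.

Lemma dotv_ge0 a : 0 <= dotv a a.
Proof. by apply: sumr_ge0 => j _; rewrite -expr2 sqr_ge0. Qed.

Lemma dotv_eq0 a : dotv a a = 0 -> a = 0.
Proof.
move=> /psumr_eq0P a0; apply/matrixP => j k; rewrite ord1 mxE.
by apply/eqP; rewrite -sqrf_eq0 expr2 a0 // => i _; rewrite -expr2 sqr_ge0.
Qed.

Lemma enorm_ge0 a : 0 <= enorm a.
Proof. exact: sqrtr_ge0. Qed.

Lemma enorm_sqr a : enorm a ^+ 2 = dotv a a.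
Proof. by rewrite sqr_sqrtr // dotv_ge0. Qed.

Lemma enorm_eq0 a : enorm a = 0 -> a = 0.
Proof.
move=> /eqP; rewrite sqrtr_eq0 => a_le0.
by apply: dotv_eq0; apply/eqP; rewrite eq_le a_le0 dotv_ge0.
Qed.

Lemma dotv0l c : dotv 0 c = 0.
Proof. by rewrite -(scale0r 0) dotvZl mul0r. Qed.

Lemma dotv_le_enorm a b : dotv a b <= enorm a * enorm b.
Proof.
have [/enorm_eq0->|na] := eqVneq (enorm a) 0.
  by rewrite dotv0l mulr_ge0 ?enorm_ge0.
have [/enorm_eq0->|nb] := eqVneq (enorm b) 0.
  by rewrite dotvC dotv0l mulr_ge0 ?enorm_ge0.
have ab_gt0 : 0 < enorm a * enorm b by rewrite mulr_gt0 // lt0r ?na ?nb enorm_ge0.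
(* |(|b| a - |a| b)|^2 = 2 |a| |b| (|a| |b| - <a, b>) *)
have := dotv_ge0 (enorm b *: a - enorm a *: b).
rewrite !(dotvBl, dotvBr, dotvZl, dotvZr) (dotvC b a) -!enorm_sqr.
by nra.
Qed.

Lemma enormZ k a : enorm (k *: a) = `|k| * enorm a.
Proof. by rewrite /enorm dotvZl dotvZr mulrA -expr2 sqrtrM ?sqr_ge0 // sqrtr_sqr. Qed.

End Euclidean.

Section LineCalculus.
Variables (R : realType) (n : nat) (F : 'cV[R]_n -> R).

Lemma is_derive_line_gradient (y e g : 'cV[R]_n) (s : R) :
  is_gradient F (y + s *: e) g ->
  is_derive s 1 (fun t => F (y + t *: e)) (dotv g e).
Proof.
move=> [dF dFE].
(* the difference quotients of t |-> F (y + t e) at s are those of F at y + s e along e *)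
have quotE : (fun h : R => h^-1 *: ((fun t => F (y + t *: e)) (h *: 1 + s) - F (y + s *: e)))
    = (fun h : R => h^-1 *: (F (h *: e + (y + s *: e)) - F (y + s *: e))).
  by apply/funext => h; rewrite [h *: 1]mulr1 addrCA -scalerDl addrC.
split; first by rewrite /derivable /= quotE; exact: diff_derivable.
by rewrite /derive /= quotE -/(derive F _ e) deriveE.
Qed.

Lemma line_gradient_ub (gF : 'cV[R]_n -> 'cV[R]_n) (y e : 'cV[R]_n) (t a b : R) :
  0 < t ->
  (forall s, 0 <= s <= t -> is_gradient F (y + s *: e) (gF (y + s *: e))) ->
  (forall s, 0 < s < t -> dotv (gF (y + s *: e)) e <= a + b * s) ->
  F (y + t *: e) <= F y + a * t + b / 2 * t ^+ 2.
Proof.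
move=> t_gt0 gradF slope_le.
pose psi s := F (y + s *: e) - (a * s + b / 2 * s ^+ 2).
pose dpsi s := dotv (gF (y + s *: e)) e - (a + b * s).
have psi_derive s : 0 <= s <= t -> is_derive s 1 psi (dpsi s).
  (* [dF] is used through instance resolution for [is_derive] *)
  move=> /gradF /is_derive_line_gradient dF.
  by apply: is_derive_eq; rewrite /dpsi /GRing.scale /=; field.
have [c /[!in_itv] /= /andP[c_gt0 c_lt] psiE] :
    exists2 c, c \in `]0, t[ & psi t - psi 0 = dpsi c * (t - 0).
  apply: MVT => // [s /[!in_itv] /= /andP[s_gt0 s_lt]|].
    by apply: psi_derive; rewrite !ltW.
  apply: continuous_in_subspaceT => s /[!inE] /= /psi_derive [psi_der _].
  exact/differentiable_continuous/derivable1_diffP.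
have : psi t <= psi 0.
  rewrite -subr_le0 psiE subr0 pmulr_lle0 // subr_le0.
  by apply: slope_le; rewrite c_gt0.
by rewrite /psi scale0r addr0 mulr0 expr0n /= mulr0 addr0 subr0; lra.
Qed.

End LineCalculus.

Definition bregman (R : realType) (n : nat) (omega : 'cV[R]_n -> R)
    (gradw : 'cV[R]_n -> 'cV[R]_n) (u z : 'cV[R]_n) : R :=
  omega u - omega z - dotv (gradw z) (u - z).

Definition prox_objective (R : realType) (n : nat) (omega h : 'cV[R]_n -> R)
    (gradw : 'cV[R]_n -> 'cV[R]_n) (g : 'cV[R]_n) (c : R) (x u : 'cV[R]_n) : R :=
  dotv g u + c * bregman omega gradw u x + h u.

Section ProxStep.
Variables (R : realType) (n : nat) (X : set 'cV[R]_n).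
Hypothesis convX : convex_cV X.

Lemma convex_segment (x y : 'cV[R]_n) (s : R) :
  X x -> X y -> 0 <= s <= 1 -> X (x + s *: (y - x)).
Proof.
by move=> Xx Xy /andP[s_ge0 s_le1]; rewrite segmentE; apply: convX.
Qed.

Lemma strongly_convex_segment (mu : R) (h : 'cV[R]_n -> R) (x y : 'cV[R]_n) (t : R) :
  0 <= mu -> strongly_convex_on mu X h -> X x -> X y -> 0 <= t <= 1 ->
  h (x + t *: (y - x)) <= h x + t * (h y - h x).
Proof.
move=> mu_ge0 sc Xx Xy /andP[t_ge0 t_le1].
rewrite segmentE; apply: le_trans (sc _ _ _ Xy Xx t_ge0 t_le1) _.
have : 0 <= mu / 2 * t * (1 - t) * enorm (y - x) ^+ 2.
  by rewrite !mulr_ge0 ?subr_ge0 ?invr_ge0 ?exprn_ge0 ?enorm_ge0.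
lra.
Qed.

Variables (f : 'cV[R]_n -> R) (gradf : 'cV[R]_n -> 'cV[R]_n).
Hypothesis gradfP : forall x, X x -> is_gradient f x (gradf x).

Lemma descent_lemma (L : R) (x y : 'cV[R]_n) :
  X x -> X y ->
  (forall s, 0 < s < 1 -> dotv (gradf (x + s *: (y - x)) - gradf x) (y - x)
                            <= L * s * dotv (y - x) (y - x)) ->
  f y <= f x + dotv (gradf x) (y - x) + L / 2 * dotv (y - x) (y - x).
Proof.
move=> Xx Xy lip.
have := @line_gradient_ub R n f gradf x (y - x) 1 (dotv (gradf x) (y - x))
  (L * dotv (y - x) (y - x)) ltr01.
have -> : x + 1 *: (y - x) = y by rewrite scale1r addrC subrK.
rewrite expr1n !mulr1 mulrAC; apply.
  move=> s s01; apply: gradfP; exact: convex_segment.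
move=> s /andP[s_gt0 s_lt1]; have := lip s; rewrite s_gt0 s_lt1 dotvBl; lra.
Qed.

Variables (omega : 'cV[R]_n -> R) (gradw : 'cV[R]_n -> 'cV[R]_n) (alpha : R).
Hypothesis gradwP : forall x, X x -> is_gradient omega x (gradw x).
Hypothesis gradw_strongly_monotone : forall x z, X x -> X z ->
  alpha * enorm (x - z) ^+ 2 <= dotv (x - z) (gradw x - gradw z).

Lemma bregman_segment_ub (y z : 'cV[R]_n) (t : R) :
  X y -> X z -> 0 < t <= 1 ->
  bregman omega gradw (y + t *: (z - y)) z
    <= bregman omega gradw y z - alpha * dotv (z - y) (z - y) * (t - t ^+ 2 / 2).
Proof.
move=> Xy Xz /andP[t_gt0 t_le1].
set d := z - y; set dd := dotv d d; set K := dotv (gradw z) d.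
have slope s : 0 < s < t -> dotv (gradw (y + s *: d)) d <= (K - alpha * dd) + alpha * dd * s.
  move=> /andP[s_gt0 s_lt]; have s_lt1 : s < 1 by lra.
  have Xys : X (y + s *: d) by apply: convex_segment; rewrite ?ltW ?s_gt0.
  have := gradw_strongly_monotone Xz Xys.
  have -> : z - (y + s *: d) = (1 - s) *: d.
    by rewrite scalerBl scale1r opprD addrA.
  rewrite enorm_sqr !(dotvZl, dotvZr) (dotvBr (gradw z)) -/dd (dotvC d (gradw z)) -/K.
  move=> mono; have : alpha * ((1 - s) * dd) <= K - dotv d (gradw (y + s *: d)).
    by rewrite -(@ler_pM2l _ (1 - s)) ?subr_gt0 // mulrCA.
  rewrite (dotvC d); lra.
rewrite /bregman (_ : y + t *: d - z = (y - z) + t *: d); last by rewrite addrAC.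
rewrite dotvDr dotvZr -/K.
suff : omega (y + t *: d) <= omega y + (K - alpha * dd) * t + alpha * dd / 2 * t ^+ 2 by lra.
apply: line_gradient_ub t_gt0 _ slope.
move=> s /andP[s_ge0 s_le]; apply: gradwP; apply: convex_segment => //.
by rewrite s_ge0 (le_trans s_le t_le1).
Qed.
Variables (h : 'cV[R]_n -> R) (mu : R).
Hypothesis mu_ge0 : 0 <= mu.
Hypothesis h_strongly_convex : strongly_convex_on mu X h.
Hypothesis alpha_gt0 : 0 < alpha.

Lemma prox_step_optimality (L : R) (x x' : 'cV[R]_n) :
  0 <= L -> X x -> X x' ->
  (forall t, 0 < t <= 1 ->
     prox_objective omega h gradw (gradf x) (L / alpha) x x'
       <= prox_objective omega h gradw (gradf x) (L / alpha) x (x' + t *: (x - x'))) ->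
  dotv (gradf x) (x' - x) + L * dotv (x' - x) (x' - x) <= h x - h x'.
Proof.
move=> L_ge0 Xx Xx' opt.
set d := x' - x; set dd := dotv d d; set K := dotv (gradf x) d.
apply: (@ler_linear_slack _ _ _ (L / 2 * dd)) => t t01.
have /andP[t_gt0 t_le1] := t01.
have ddE : dotv (x - x') (x - x') = dd by rewrite -opprB dotvNl dotvNr opprK.
have V_le := bregman_segment_ub Xx' Xx t01; rewrite ddE in V_le.
have LV_le := ler_wpM2l (divr_ge0 L_ge0 (ltW alpha_gt0)) V_le.
have t01w : 0 <= t <= 1 by rewrite ltW.
have h_le := strongly_convex_segment mu_ge0 h_strongly_convex Xx' Xx t01w.
have := opt t t01; rewrite /prox_objective.
have gE : dotv (gradf x) (x - x') = - K by rewrite -dotvNr opprB.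
rewrite dotvDr dotvZr gE.
move: LV_le h_le; set V0 := bregman _ _ x' x; set Vt := bregman _ _ _ x; set ht := h _.
move=> LV_le h_le opt_t.
have : 0 <= t * (h x - h x' + L / 2 * dd * t - (K + L * dd)).
  have LVE : L / alpha * (V0 - alpha * dd * (t - t ^+ 2 / 2))
             = L / alpha * V0 - L * dd * (t - t ^+ 2 / 2).
    by field; rewrite gt_eqF.
  rewrite LVE in LV_le; lra.
by rewrite pmulr_rge0 // subr_ge0 addrAC.
Qed.

Lemma prox_step_descent (L : R) (x x' : 'cV[R]_n) :
  0 <= L -> X x -> X x' ->
  (forall s, 0 < s < 1 -> dotv (gradf (x + s *: (x' - x)) - gradf x) (x' - x)
                            <= L * s * dotv (x' - x) (x' - x)) ->
  (forall t, 0 < t <= 1 ->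
     prox_objective omega h gradw (gradf x) (L / alpha) x x'
       <= prox_objective omega h gradw (gradf x) (L / alpha) x (x' + t *: (x - x'))) ->
  f x' + h x' <= f x + h x - L / 2 * dotv (x' - x) (x' - x).
Proof.
move=> L_ge0 Xx Xx' lip opt.
have := descent_lemma Xx Xx' lip.
have := prox_step_optimality L_ge0 Xx Xx' opt.
lra.
Qed.

End ProxStep.

Section Blocks.
Variables (R : realType) (p : nat) (ni : 'I_p -> nat) (n : nat).
Variable U : forall i : 'I_p, 'M[R]_(n, ni i).

Lemma convex_block_product (Xi : forall i, set 'cV[R]_(ni i)) :
  (forall i, convex_cV (Xi i)) -> convex_cV [set x | forall i, Xi i ((U i)^T *m x)].
Proof.
move=> convXi a b t Xa Xb t_ge0 t_le1 i /=.
by rewrite mulmxDr -!scalemxAr; apply: convXi.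
Qed.

Lemma mem_block_update (Xi : forall i, set 'cV[R]_(ni i)) (i : 'I_p) (x y : 'cV[R]_n) :
  (forall j, Xi j ((U j)^T *m x)) ->
  (forall j, j != i -> (U j)^T *m y = (U j)^T *m x) ->
  Xi i ((U i)^T *m y) -> forall j, Xi j ((U j)^T *m y).
Proof. by move=> Xx yx Xyi j; have [->|/yx->] := eqVneq j i. Qed.

Hypothesis HUsum : \sum_(i < p) U i *m (U i)^T = 1%:M.
Hypothesis HUid : forall i, (U i)^T *m U i = 1%:M.
Hypothesis HUorth : forall i j, i != j -> (U i)^T *m U j = 0.

Lemma block_update_off (i j : 'I_p) (x : 'cV[R]_n) (c : 'cV[R]_(ni i)) :
  j != i -> (U j)^T *m (x + U i *m c) = (U j)^T *m x.
Proof. by move=> ji; rewrite mulmxDr mulmxA HUorth // mul0mx addr0. Qed.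

Lemma sub_single_block (i : 'I_p) (x y : 'cV[R]_n) :
  (forall j, j != i -> (U j)^T *m y = (U j)^T *m x) ->
  y - x = U i *m ((U i)^T *m y - (U i)^T *m x).
Proof.
move=> yx; rewrite -[y - x]mul1mx -HUsum mulmx_suml (bigD1 i) //= big1 ?addr0.
  by rewrite -mulmxA mulmxBr.
by move=> j ji; rewrite -mulmxA mulmxBr yx // subrr mulmx0.
Qed.

Lemma dotv_block (i : 'I_p) (w w' : 'cV[R]_(ni i)) :
  dotv (U i *m w) (U i *m w') = dotv w w'.
Proof. by rewrite dotv_mulmx mulmxA HUid mul1mx. Qed.

Variables (Xi : forall i, set 'cV[R]_(ni i)).
Arguments Xi : clear implicits.
Hypothesis convXi : forall i, convex_cV (Xi i).
Let X := [set x : 'cV[R]_n | forall i, Xi i ((U i)^T *m x)].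

Let convX : convex_cV X. Proof. exact: convex_block_product. Qed.

Lemma block_lipschitz_segment (g : 'cV[R]_n -> 'cV[R]_n) (L : R) (i : 'I_p) (x x' : 'cV[R]_n) :
  X x -> X x' -> (forall j, j != i -> (U j)^T *m x' = (U j)^T *m x) ->
  (forall c : 'cV[R]_(ni i), X (x + U i *m c) ->
     enorm ((U i)^T *m g (x + U i *m c) - (U i)^T *m g x) <= L * enorm c) ->
  forall s, 0 < s < 1 ->
    dotv (g (x + s *: (x' - x)) - g x) (x' - x) <= L * s * dotv (x' - x) (x' - x).
Proof.
move=> Xx Xx' x'x lip s /andP[s_gt0 s_lt1].
have Xs : X (x + s *: (x' - x)).
  by apply: (convex_segment convX Xx Xx'); rewrite !ltW.
set w := (U i)^T *m x' - (U i)^T *m x.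
have dE : x' - x = U i *m w := sub_single_block x'x.
rewrite dE scalemxAr in Xs *; rewrite dotv_block dotv_mulmx mulmxBr.
apply: le_trans (dotv_le_enorm _ _) _.
apply: le_trans (ler_wpM2r (enorm_ge0 w) (lip _ Xs)) _.
by rewrite enormZ gtr0_norm // -enorm_sqr mulrA mulrAC expr2 mulrA.
Qed.

Variables (h : 'cV[R]_n -> R) (hi : forall i, 'cV[R]_(ni i) -> R).
Arguments hi : clear implicits.
Hypothesis h_sep : forall x, X x -> h x = \sum_i hi i ((U i)^T *m x).
Variables (omega : 'cV[R]_n -> R) (gradw : 'cV[R]_n -> 'cV[R]_n).
Variables (Vi : forall i, 'cV[R]_(ni i) -> 'cV[R]_(ni i) -> R).
Arguments Vi : clear implicits.
Hypothesis V_sep : forall x z, X x -> X z ->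
  bregman omega gradw x z = \sum_i Vi i ((U i)^T *m x) ((U i)^T *m z).

Lemma prox_objective_block_diff (i : 'I_p) (c : R) (g x y z : 'cV[R]_n) :
  X x -> X y -> X z -> (forall j, j != i -> (U j)^T *m y = (U j)^T *m z) ->
  prox_objective omega h gradw g c x y - prox_objective omega h gradw g c x z
  = (dotv ((U i)^T *m g) ((U i)^T *m y) + c * Vi i ((U i)^T *m y) ((U i)^T *m x)
       + hi i ((U i)^T *m y))
    - (dotv ((U i)^T *m g) ((U i)^T *m z) + c * Vi i ((U i)^T *m z) ((U i)^T *m x)
       + hi i ((U i)^T *m z)).
Proof.
move=> Xx Xy Xz yz.
have dotE : dotv g y - dotv g z
    = dotv ((U i)^T *m g) ((U i)^T *m y) - dotv ((U i)^T *m g) ((U i)^T *m z).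
  by rewrite -!dotvBr (sub_single_block yz) dotv_mulmx.
have VE : bregman omega gradw y x - bregman omega gradw z x
    = Vi i ((U i)^T *m y) ((U i)^T *m x) - Vi i ((U i)^T *m z) ((U i)^T *m x).
  by rewrite !V_sep //; apply: sumrB_except => j /yz->.
have hE : h y - h z = hi i ((U i)^T *m y) - hi i ((U i)^T *m z).
  by rewrite !h_sep //; apply: sumrB_except => j /yz->.
rewrite /prox_objective.
transitivity ((dotv g y - dotv g z)
  + c * (bregman omega gradw y x - bregman omega gradw z x) + (h y - h z)).
  by ring.
by rewrite dotE VE hE; ring.
Qed.

Variables (f : 'cV[R]_n -> R) (gradf : 'cV[R]_n -> 'cV[R]_n) (alpha mu : R).
Hypothesis gradfP : forall x, X x -> is_gradient f x (gradf x).
Hypothesis gradwP : forall x, X x -> is_gradient omega x (gradw x).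
Hypothesis gradw_strongly_monotone : forall x z, X x -> X z ->
  alpha * enorm (x - z) ^+ 2 <= dotv (x - z) (gradw x - gradw z).
Hypothesis alpha_gt0 : 0 < alpha.
Hypothesis mu_ge0 : 0 <= mu.
Hypothesis h_strongly_convex : strongly_convex_on mu X h.

Lemma coordinate_step_descent (L : R) (i : 'I_p) (x x' : 'cV[R]_n) :
  0 < L -> X x -> (forall j, j != i -> (U j)^T *m x' = (U j)^T *m x) ->
  (forall c : 'cV[R]_(ni i), X (x + U i *m c) ->
     enorm ((U i)^T *m gradf (x + U i *m c) - (U i)^T *m gradf x) <= L * enorm c) ->
  is_argmin (Xi i)
    (fun u => dotv ((U i)^T *m gradf x) u + (alpha / L)^-1 * Vi i u ((U i)^T *m x)
              + hi i u)
    ((U i)^T *m x') ->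
  f x' + h x' <= f x + h x - L / 2 * enorm ((U i)^T *m x - (U i)^T *m x') ^+ 2.
Proof.
move=> L_gt0 Xx x'x lip [Xx'i x'_min].
have Xx' : X x' := mem_block_update Xx x'x Xx'i.
rewrite -[(U i)^T *m x - _]opprB enorm_sqr dotvNl dotvNr opprK -dotv_block -(sub_single_block x'x).
apply: (prox_step_descent convX gradfP gradwP gradw_strongly_monotone mu_ge0
  h_strongly_convex alpha_gt0 (ltW L_gt0) Xx Xx').
  exact: block_lipschitz_segment Xx Xx' x'x lip.
move=> t /andP[t_gt0 t_le1].
have XY : X (x' + t *: (x - x')) by apply: (convex_segment convX Xx' Xx); rewrite ltW.
have Yx' j : j != i -> (U j)^T *m (x' + t *: (x - x')) = (U j)^T *m x'.
  have xx' k : k != i -> (U k)^T *m x = (U k)^T *m x' by move=> /x'x->.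
  by rewrite (sub_single_block xx') scalemxAr; apply: block_update_off.
rewrite -subr_ge0 (prox_objective_block_diff _ _ Xx XY Xx' Yx') subr_ge0 -invf_div.
exact/x'_min/XY.
Qed.

Lemma gradient_mapping_sqr_le (L : R) (i : 'I_p) (x x' : 'cV[R]_n) :
  0 < L -> X x -> (forall j, j != i -> (U j)^T *m x' = (U j)^T *m x) ->
  (forall c : 'cV[R]_(ni i), X (x + U i *m c) ->
     enorm ((U i)^T *m gradf (x + U i *m c) - (U i)^T *m gradf x) <= L * enorm c) ->
  is_argmin (Xi i)
    (fun u => dotv ((U i)^T *m gradf x) u + (alpha / L)^-1 * Vi i u ((U i)^T *m x)
              + hi i u)
    ((U i)^T *m x') ->
  enorm ((alpha / L)^-1 *: ((U i)^T *m x - (U i)^T *m x')) ^+ 2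
    <= 2 * L / alpha ^+ 2 * ((f x + h x) - (f x' + h x')).
Proof.
move=> L_gt0 Xx x'x lip x'_min.
have := coordinate_step_descent L_gt0 Xx x'x lip x'_min.
rewrite enormZ invf_div gtr0_norm ?divr_gt0 // exprMn; set e := enorm _ ^+ 2 => descent.
have -> : (L / alpha) ^+ 2 * e = 2 * L / alpha ^+ 2 * (L / 2 * e).
  by field; rewrite gt_eqF.
apply: ler_wpM2l; last by lra.
by rewrite divr_ge0 ?mulr_ge0 ?ltW ?exprn_gt0.
Qed.

End Blocks.

Theorem proposition1
  (R : realType) (p : nat) (ni : 'I_p -> nat) (n : nat)
  (U : forall i : 'I_p, 'M[R]_(n, ni i))
  (* block structure: x(i) = U_i^T x, x = sum_i U_i x(i) *)
  (Hn : n = (\sum_(i < p) ni i)%N)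
  (HUsum : \sum_(i < p) U i *m (U i)^T = 1%:M)
  (HUid : forall i : 'I_p, (U i)^T *m U i = 1%:M)
  (HUorth : forall i j : 'I_p, i != j -> (U i)^T *m U j = 0)
  (* feasible set X = prod_i X_i, each X_i closed and convex *)
  (Xi : forall i : 'I_p, set 'cV[R]_(ni i))
  (HXcl : forall i, closed (Xi i))
  (HXcv : forall i, convex_cV (Xi i))
  (X : set 'cV[R]_n)
  (HX : X = [set x | forall i, Xi i ((U i)^T *m x)])
  (* smooth part f, C^1 on X, with gradient gradf *)
  (f : 'cV[R]_n -> R) (gradf : 'cV[R]_n -> 'cV[R]_n)
  (Hgradf : forall x, X x -> is_gradient f x (gradf x))
  (Hgradf_cont : {within X, continuous gradf})
  (* block-coordinate Lipschitz gradient *)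
  (Li : 'I_p -> R)
  (HLi : forall (i : 'I_p) (x : 'cV[R]_n) (hh : 'cV[R]_(ni i)),
      X x -> X (x + U i *m hh) ->
      enorm ((U i)^T *m gradf (x + U i *m hh) - (U i)^T *m gradf x)
        <= Li i * enorm hh)
  (L : R) (HLdef : L = \big[Num.max/0]_(i < p) Li i) (HLpos : 0 < L)
  (* nonsmooth part h, continuous, alpha-strongly convex, block separable *)
  (alpha : R) (Halpha : 0 < alpha)
  (h : 'cV[R]_n -> R) (hi : forall i : 'I_p, 'cV[R]_(ni i) -> R)
  (Hh_cont : {within X, continuous h})
  (Hh_sc : strongly_convex_on alpha X h)
  (Hh_sep : forall x, X x -> h x = \sum_(i < p) hi i ((U i)^T *m x))
  (* optimal value Phi^* of Phi = f + h over X (attained) *)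
  (Phistar : R)
  (HPhistar : (exists2 xs, X xs & f xs + h xs = Phistar) /\
              (forall x, X x -> Phistar <= f x + h x))
  (* distance generating function omega with modulus alpha *)
  (omega : 'cV[R]_n -> R) (gradw : 'cV[R]_n -> 'cV[R]_n)
  (Hgradw : forall x, X x -> is_gradient omega x (gradw x))
  (Hgradw_cont : {within X, continuous gradw})
  (Hw_mod : forall x z, X x -> X z ->
      alpha * enorm (x - z) ^+ 2 <= dotv (x - z) (gradw x - gradw z))
  (* block separable prox-function V *)
  (Vi : forall i : 'I_p, 'cV[R]_(ni i) -> 'cV[R]_(ni i) -> R)
  (HV_sep : forall x z, X x -> X z ->
      omega x - omega z - dotv (gradw z) (x - z)
        = \sum_(i < p) Vi i ((U i)^T *m x) ((U i)^T *m z))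
  (* coordinate mirror descent iterates xs k i = x_k^i, gamma = alpha/L *)
  (x0 : 'cV[R]_n) (Hx0 : X x0)
  (xs : nat -> nat -> 'cV[R]_n)
  (Hxs0 : xs 0%N 0%N = x0)
  (Hxsnext : forall k, xs k.+1 0%N = xs k p)
  (Hxsstep : forall (k : nat) (i : 'I_p),
      (forall j : 'I_p, j != i ->
         (U j)^T *m xs k i.+1 = (U j)^T *m xs k i) /\
      is_argmin (Xi i)
        (fun u => dotv ((U i)^T *m gradf (xs k i)) u
                  + (alpha / L)^-1 * Vi i u ((U i)^T *m xs k i)
                  + hi i u)
        ((U i)^T *m xs k i.+1))
  (N : nat) (HN : (0 < N)%N) :
  let gamma := alpha / L in
  let Delta k := \sum_(i < p)
      enorm (gamma^-1 *: ((U i)^T *m xs k i - (U i)^T *m xs k i.+1)) ^+ 2 in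
  let D := Num.sqrt ((f x0 + h x0 - Phistar) / L) in
  exists2 k : nat, (k < N)%N &
    Delta k <= D ^+ 2 * L / (N%:R * (alpha ^+ 2 / (2 * L))).
Proof.
move=> gamma Delta D.
subst X; set X := [set x | forall i, Xi i ((U i)^T *m x)].
pose Phi y := f y + h y.
pose c := 2 * L / alpha ^+ 2.
have Xxs : forall k i, (i <= p)%N -> X (xs k i).
  apply: cyclic_sweep_ind => [|//|k i Xxki]; first by rewrite Hxs0.
  by have [x'x [Xx'i _]] := Hxsstep k i; apply: mem_block_update Xxki x'x Xx'i.
have step k (i : 'I_p) :
    enorm (gamma^-1 *: ((U i)^T *m xs k i - (U i)^T *m xs k i.+1)) ^+ 2
      <= c * Phi (xs k i) - c * Phi (xs k i.+1).
  have Xx := Xxs k i (ltnW (ltn_ord i)).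
  have [x'x x'_min] := Hxsstep k i.
  rewrite -mulrBr; apply: (gradient_mapping_sqr_le HUsum HUid HUorth HXcv Hh_sep HV_sep
    Hgradf Hgradw Hw_mod Halpha (ltW Halpha) Hh_sc HLpos Xx x'x _ x'_min) => d Xd.
  apply: le_trans (HLi i _ d Xx Xd) (ler_wpM2r (enorm_ge0 d) _).
  by rewrite HLdef; apply: le_bigmax.
have outer k : Delta k <= c * Phi (xs k 0%N) - c * Phi (xs k.+1 0%N).
  by rewrite Hxsnext; apply: (@sum_le_telescope _ p (fun i => c * Phi (xs k i))).
have total : \sum_(k < N) Delta k <= c * Phi x0 - c * Phi (xs N 0%N).
  by rewrite -Hxs0; apply: (@sum_le_telescope _ N (fun k => c * Phi (xs k 0%N))).
apply: (exists_le_of_sum_le HN (le_trans total _)).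
have [_ Phistar_le] := HPhistar.
have := Phistar_le _ (Xxs N 0%N (leq0n p)); rewrite -/(Phi _) => PhiN.
have -> : N%:R * (D ^+ 2 * L / (N%:R * (alpha ^+ 2 / (2 * L)))) = c * (Phi x0 - Phistar).
  rewrite /D sqr_sqrtr ?divr_ge0 ?subr_ge0 ?Phistar_le ?ltW // /c /Phi.
  by field; rewrite !gt_eqF ?ltr0n.
rewrite mulrBr lerD2l lerN2; apply: ler_wpM2l => //.
by rewrite divr_ge0 ?mulr_ge0 ?ltW ?exprn_gt0.
Qed.
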